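(* Let $P\subseteq\mathbb{R}^n$ be a rational polyhedron, let $f:\mathbb{R}^n\to\mathbb{R}$ be a polynomial of degree at most three, and let $\bar x\in P$ and $\bar v\in\operatorname{rec}P$ be such that $f(\bar x+\lambda\bar v)\to+\infty$ as $\lambda\to+\infty$ with $f(\bar x+\lambda\bar v)=\Theta(\lambda^3)$. Then for every $\epsilon>0$ there exist $\tilde x,\tilde v\in\mathbb{Q}^n$ with $\tilde x\in P$, $\tilde v\in\operatorname{rec}P$, $\|\bar x-\tilde x\|<\epsilon$, $\|\bar v-\tilde v\|<\epsilon$, such that $f(\tilde x+\lambda\tilde v)\to+\infty$ as $\lambda\to+\infty$ and $f(\tilde x+\lambda\tilde v)=\Theta(\lambda^3)$.
   Context: $\operatorname{rec}P$ denotes the recession cone of $P$, and $\|\cdot\|$ is the Euclidean norm. *)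

From HB Require Import structures.
From mathcomp Require Import all_boot all_order all_algebra.
From mathcomp Require Import reals.
From mathcomp Require Import mpoly.
Set Implicit Arguments. Unset Strict Implicit. Unset Printing Implicit Defensive.
Import Order.TTheory GRing.Theory Num.Theory.
Local Open Scope ring_scope.

Definition polyhedron (R : realType) (m n : nat)
  (A : 'M[rat]_(m, n)) (b : 'cV[rat]_m) : 'cV[R]_n -> Prop :=
  fun x => forall i : 'I_m, (map_mx ratr A *m x) i 0 <= ratr (b i 0).

Definition rec_cone (R : realType) (n : nat) (P : 'cV[R]_n -> Prop)
  : 'cV[R]_n -> Prop :=
  fun v => forall x, P x -> forall lam : R, 0 <= lam -> P (x + lam *: v).

Definition enorm (R : realType) (n : nat) (x : 'cV[R]_n) : R :=
  Num.sqrt (\sum_(i < n) x i 0 ^+ 2).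

Definition is_rational_vec (R : realType) (n : nat) (x : 'cV[R]_n) : Prop :=
  exists q : 'cV[rat]_n, x = map_mx ratr q.

Definition peval (R : realType) (n : nat) (f : {mpoly R[n]}) (x : 'cV[R]_n) : R :=
  f.@[fun i => x i 0].

Definition tends_pinfty (R : realType) (g : R -> R) : Prop :=
  forall M : R, exists L : R, forall lam : R, L <= lam -> M <= g lam.

Definition big_theta_cube (R : realType) (g : R -> R) : Prop :=
  exists c1 c2 L : R, [/\ 0 < c1, 0 < c2 &
    forall lam : R, L <= lam ->
      c1 * `|lam| ^+ 3 <= `|g lam| /\ `|g lam| <= c2 * `|lam| ^+ 3].

From mathcomp Require Import all_boot all_order all_algebra.
From mathcomp Require Import reals mpoly.
From mathcomp Require Import ring lra zify.
Import Order.TTheory GRing.Theory Num.Theory.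
Local Open Scope ring_scope.
Set Implicit Arguments. Unset Strict Implicit.

(* Along a ray x + lam v, a polynomial f of degree <= 3 is a cubic in lam whose
   leading coefficient equals the third finite difference
     D(x, v) = (f(x+3v) - 3 f(x+2v) + 3 f(x+v) - f(x)) / 6.
   Such a cubic tends to +oo with order lam^3 exactly when its leading
   coefficient is positive, so the hypotheses say D(xb, vb) > 0.  Since f is
   continuous, D stays positive on a neighbourhood of (xb, vb).  It remains to
   find rational xt in P and vt in rec P in that neighbourhood:
   - near any of its points x, a rational polyhedron agrees with the rational
     affine subspace cut out by the constraints active at x, and rational
     solutions of a rational linear system are dense in its real solutions;
   - the recession cone of the nonempty polyhedron { A x <= b } is the rational
     polyhedron { A v <= 0 }, so the same density result applies to vb. *)

Section Approximation.
Variable R : realType.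

Definition close_by n (x y : 'cV[R]_n) (d : R) : Prop :=
  forall j, `|x j 0 - y j 0| < d.

Lemma close_by_le n (x y : 'cV[R]_n) (d d' : R) :
  d <= d' -> close_by x y d -> close_by x y d'.
Proof. by move=> le_dd' hxy j; exact: lt_le_trans (hxy j) le_dd'. Qed.

Lemma close_by_minl n (x y : 'cV[R]_n) (d d' : R) :
  close_by x y (Num.min d d') -> close_by x y d.
Proof. by apply: close_by_le; rewrite ge_min lexx. Qed.

Lemma close_by_minr n (x y : 'cV[R]_n) (d d' : R) :
  close_by x y (Num.min d d') -> close_by x y d'.
Proof. by apply: close_by_le; rewrite ge_min lexx orbT. Qed.

Lemma enorm_close n (x y : 'cV[R]_n) (eps : R) :
  0 < eps -> close_by x y (eps / (n%:R + 1)) -> enorm (x - y) < eps.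
Proof.
move=> heps hxy.
set eta := eps / (n%:R + 1).
have hn : 0 <= n%:R :> R by rewrite ler0n.
have heta : 0 < eta by rewrite divr_gt0 //; lra.
have eta_n : eta * (n%:R + 1) = eps by rewrite /eta; field; lra.
have hsum : \sum_(i < n) (x - y) i 0 ^+ 2 <= n%:R * eta ^+ 2.
  have -> : n%:R * eta ^+ 2 = \sum_(i < n) eta ^+ 2.
    by rewrite sumr_const card_ord mulr_natl.
  apply: ler_sum => i _.
  have hi : `|(x - y) i 0| <= eta by rewrite !mxE ltW.
  rewrite -real_normK ?num_real //.
  by apply: lerXn2r => //; rewrite nnegrE ?normr_ge0 ?(ltW heta).
rewrite /enorm -[X in _ < X](@ger0_norm _ eps) ?ltW // -sqrtr_sqr.
rewrite ltr_sqrt ?exprn_gt0 //; apply: le_lt_trans hsum _.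
rewrite -eta_n; nra.
Qed.

Definition rat_approx (eta r : R) : rat :=
  let N := (Num.truncn eta^-1).+1 in (Num.floor (r * N%:R))%:~R / N%:R.

Lemma rat_approxP (eta r : R) : 0 < eta -> `|r - ratr (rat_approx eta r)| < eta.
Proof.
move=> heta; rewrite /rat_approx.
set N := (Num.truncn eta^-1).+1.
have hN : 0 < N%:R :> R by rewrite ltr0n.
have hNeta : eta^-1 < N%:R :> R by apply: truncnS_gt.
rewrite fmorph_div rmorph_int rmorph_nat.
set z := Num.floor (r * N%:R).
have z_le : (z%:~R : R) <= r * N%:R by apply: floor_le.
have z_gt : r * N%:R < (z + 1)%:~R :> R by apply: floorD1_gt.
rewrite intrD in z_gt.
have -> : r - z%:~R / N%:R = (r * N%:R - z%:~R) / N%:R by field; rewrite gt_eqF.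
rewrite normrM ger0_norm ?subr_ge0 // ger0_norm ?invr_ge0 ?ltW //.
have : eta^-1 * eta = 1 by rewrite mulVf // gt_eqF.
have : N%:R^-1 * N%:R = 1 :> R by rewrite mulVf // gt_eqF.
nra.
Qed.

Lemma finite_pos_lower_bound (I : finType) (s : I -> R) :
  (forall i, 0 < s i) -> exists2 e : R, 0 < e & forall i, e <= s i.
Proof.
move=> hs.
suff [e he H] : exists2 e : R, 0 < e & forall i, i \in enum I -> e <= s i.
  by exists e => // i; apply: H; rewrite mem_enum.
elim: (enum I) => [|a r [e he H]]; first by exists 1.
exists (Num.min (s a) e); first by rewrite lt_min hs he.
move=> i; rewrite inE => /orP [/eqP -> | hi]; first by rewrite ge_min lexx.
by rewrite ge_min H ?orbT.
Qed.

(* A coordinate error e <= t/(1+s), weighted by an l1-norm s, stays below t;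
   this turns coordinate errors into errors on rows of a product. *)
Lemma lt_of_le_div (e t s : R) : 0 < t -> 0 <= s -> e <= t / (1 + s) -> e * s < t.
Proof.
move=> ht hs he.
have ht' : t / (1 + s) * (1 + s) = t by field; lra.
have : 0 < t / (1 + s) by rewrite divr_gt0 //; lra.
nra.
Qed.

Lemma mulmx_entry_boundr m p q (B : 'M[R]_(m, p)) (C : 'M[R]_(p, q)) (e : R) i j :
  (forall k, `|C k j| <= e) -> `|(B *m C) i j| <= e * \sum_k `|B i k|.
Proof.
move=> hC; rewrite mxE mulr_sumr; apply: le_trans (ler_norm_sum _ _ _) _.
by apply: ler_sum => k _; rewrite normrM mulrC ler_wpM2r.
Qed.

Lemma mulmx_entry_boundl m p q (B : 'M[R]_(m, p)) (C : 'M[R]_(p, q)) (e : R) i j :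
  (forall k, `|B i k| <= e) -> `|(B *m C) i j| <= e * \sum_k `|C k j|.
Proof.
move=> hB; rewrite mxE mulr_sumr; apply: le_trans (ler_norm_sum _ _ _) _.
by apply: ler_sum => k _; rewrite normrM ler_wpM2r.
Qed.

End Approximation.

Section Polyhedra.
Variable R : realType.

(* Real solutions of a rational linear system M x = c are limits of rational
   solutions: write x^T = y0 + z K with y0 a rational particular solution and
   the rows of K a rational spanning set of { y | y M^T = 0 }, then round z. *)
Lemma rat_solution_dense p n (M : 'M[rat]_(p, n)) (c : 'cV[rat]_p)
    (x : 'cV[R]_n) (del : R) :
  map_mx ratr M *m x = map_mx ratr c -> 0 < del ->
  exists2 q : 'cV[rat]_n, M *m q = c & close_by x (map_mx ratr q) del.
Proof.
move=> hMx hdel.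
pose y0 := c^T *m pinvmx M^T.
have hy0 : y0 *m M^T = c^T.
  apply: mulmxKpV.
  have : ((map_mx ratr c)^T <= (map_mx (ratr : rat -> R) M)^T)%MS.
    by apply/submxP; exists x^T; rewrite -hMx trmx_mul.
  by rewrite !map_trmx map_submx.
pose K := kermx M^T; pose K' := map_mx (ratr : rat -> R) K.
have [z hz] : exists z, x^T = map_mx ratr y0 + z *m K'.
  have : (x^T - map_mx ratr y0 <= kermx (map_mx (ratr : rat -> R) M^T))%MS.
    apply/sub_kermxP; rewrite mulmxBl -map_mxM hy0 -map_trmx -trmx_mul hMx.
    by rewrite map_trmx subrr.
  by rewrite -map_kermx => /submxP [z hz]; exists z; rewrite -hz addrC subrK.
pose SK (j : 'I_n) : R := \sum_k `|K' k j|.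
have SK_ge0 j : 0 <= SK j by apply: sumr_ge0 => k _.
have [eta heta Heta] := @finite_pos_lower_bound R _ (fun j => del / (1 + SK j))
  (fun j => divr_gt0 hdel (ltr_pwDl ltr01 (SK_ge0 j))).
pose zr : 'rV[rat]_n := \row_k rat_approx eta (z 0 k).
exists (y0 + zr *m K)^T.
  apply: trmx_inj; rewrite trmx_mul trmxK mulmxDl hy0 -mulmxA /K mulmx_ker.
  by rewrite mulmx0 addr0.
have hdiff : x^T - map_mx ratr (y0 + zr *m K) = (z - map_mx ratr zr) *m K'.
  by rewrite hz map_mxD mulmxBl opprD addrACA subrr add0r map_mxM.
move=> j.
have -> : x j 0 - map_mx ratr (y0 + zr *m K)^T j 0 =
    (x^T - map_mx ratr (y0 + zr *m K)) 0 j by rewrite !mxE.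
rewrite hdiff; apply: le_lt_trans (@mulmx_entry_boundl _ _ _ _ _ _ eta _ _ _) _.
  by move=> k; rewrite !mxE ltW // rat_approxP.
exact: lt_of_le_div hdel (SK_ge0 j) (Heta j).
Qed.

(* Near a point x of a rational polyhedron, the polyhedron coincides with the
   affine subspace cut out by the constraints that are active at x; the
   active subsystem is again rational. *)
Lemma polyhedron_locally_affine m n (A : 'M[rat]_(m, n)) (b : 'cV[rat]_m)
    (x : 'cV[R]_n) :
  polyhedron A b x -> exists (M : 'M[rat]_(m, n)) (c : 'cV[rat]_m),
    map_mx ratr M *m x = map_mx ratr c /\
    exists2 d : R, 0 < d & forall y, map_mx ratr M *m y = map_mx ratr c ->
      close_by x y d -> polyhedron A b y.
Proof.
move=> hx.
set A' := map_mx (ratr : rat -> R) A.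
pose active i := (A' *m x) i 0 == ratr (b i 0).
pose D : 'M[rat]_m := diag_mx (\row_i (active i)%:R).
have maskA (w : 'cV[R]_n) i : (map_mx ratr (D *m A) *m w) i 0 =
    if active i then (A' *m w) i 0 else 0.
  rewrite map_mxM map_diag_mx -mulmxA mul_diag_mx !mxE.
  by case: (active i); rewrite ?rmorph1 ?rmorph0 ?mul1r ?mul0r.
have maskb i : map_mx (ratr : rat -> R) (D *m b) i 0 =
    if active i then ratr (b i 0) else 0.
  rewrite map_mxM map_diag_mx mul_diag_mx !mxE.
  by case: (active i); rewrite ?rmorph1 ?rmorph0 ?mul1r ?mul0r.
exists (D *m A), (D *m b); split.
  apply/matrixP => i j; rewrite (ord1 j) maskA maskb.
  by case E: (active i) => //; exact/eqP.
pose SA (i : 'I_m) : R := \sum_k `|A' i k|.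
have SA_ge0 i : 0 <= SA i by apply: sumr_ge0 => k _.
pose slack i := ratr (b i 0) - (A' *m x) i 0.
have slack_gt0 i : ~~ active i -> 0 < slack i.
  by move=> hi; rewrite lt_def subr_ge0 hx andbT subr_eq0 eq_sym.
pose s i := if active i then 1 else slack i / (1 + SA i).
have s_gt0 i : 0 < s i.
  rewrite /s; case E: (active i) => //; apply: divr_gt0; first by rewrite slack_gt0 ?E.
  by have := SA_ge0 i; lra.
have [d hd Hd] := finite_pos_lower_bound s_gt0.
exists d => // y hMy hxy i.
change ((A' *m y) i 0 <= ratr (b i 0)).
have [act | inact] := boolP (active i).
  have := congr1 (fun X : 'cV[R]_m => X i 0) hMy.
  by rewrite /= maskA maskb act => /eqP; rewrite eq_le => /andP [].
have hbound : `|(A' *m (y - x)) i 0| < slack i.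
  apply: le_lt_trans (@mulmx_entry_boundr _ _ _ _ _ _ d _ _ _) _.
    by move=> k; rewrite !mxE distrC ltW.
  apply: lt_of_le_div (SA_ge0 i) _; first exact: slack_gt0.
  by have := Hd i; rewrite /s (negbTE inact).
have hsplit : (A' *m y) i 0 = (A' *m x) i 0 + (A' *m (y - x)) i 0.
  by rewrite mulmxBr !mxE; ring.
rewrite hsplit.
have := le_lt_trans (ler_norm _) hbound.
by rewrite /slack ltrBrDl => /ltW.
Qed.

Lemma polyhedron_rat_dense m n (A : 'M[rat]_(m, n)) (b : 'cV[rat]_m)
    (x : 'cV[R]_n) (del : R) :
  polyhedron A b x -> 0 < del ->
  exists2 q : 'cV[rat]_n, polyhedron (R := R) A b (map_mx ratr q) &
    close_by x (map_mx ratr q) del.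
Proof.
move=> hx hdel.
have [M [c [hMx [d hd Hd]]]] := polyhedron_locally_affine hx.
have hmin : 0 < Num.min del d by rewrite lt_min hdel.
have [q hMq hq] := rat_solution_dense hMx hmin.
exists q; last exact: close_by_minl hq.
by apply: Hd (close_by_minr hq); rewrite -map_mxM hMq.
Qed.

Lemma rec_cone_polyhedronE m n (A : 'M[rat]_(m, n)) (b : 'cV[rat]_m)
    (x v : 'cV[R]_n) :
  polyhedron A b x -> rec_cone (polyhedron A b) v <-> polyhedron A 0 v.
Proof.
move=> hx.
set A' := map_mx (ratr : rat -> R) A.
have ray y lam i : (A' *m (y + lam *: v)) i 0 = (A' *m y) i 0 + lam * (A' *m v) i 0.
  by rewrite mulmxDr -scalemxAr !mxE.
have zero i : ratr ((0 : 'cV[rat]_m) i 0) = 0 :> R by rewrite mxE rmorph0.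
split => [hv i | hv y hy lam hlam i]; last first.
  by have := hv i; have := hy i; rewrite zero ray; nra.
rewrite zero leNgt; apply/negP => hpos.
set a := (A' *m v) i 0 in hpos.
set s := ratr (b i 0) - (A' *m x) i 0.
have hs : 0 <= s by rewrite subr_ge0; exact: hx.
have := hv x hx ((s + 1) / a) (divr_ge0 (addr_ge0 hs ler01) (ltW hpos)) i.
rewrite ray -/a.
have -> : (s + 1) / a * a = s + 1 by field; rewrite gt_eqF.
rewrite /s; lra.
Qed.

End Polyhedra.

Section Cubics.
Variable R : realType.

Lemma quad_bound (a0 a1 a2 lam : R) : 1 <= lam ->
  `|a0 + a1 * lam + a2 * lam ^+ 2| <= (`|a0| + `|a1| + `|a2|) * lam ^+ 2.
Proof.
move=> h1.
have hl : 0 <= lam by lra.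
apply: le_trans (ler_normD _ _) _.
have := ler_normD a0 (a1 * lam).
rewrite !normrM ?normrX (ger0_norm hl) expr2.
have e1 : 1 <= lam * lam by nra.
have e2 : lam <= lam * lam by nra.
have := normr_ge0 a0; have := normr_ge0 a1; have := normr_ge0 a2.
nra.
Qed.

Lemma cubic_sandwich (a0 a1 a2 a3 : R) : 0 < a3 -> exists L : R, 1 <= L /\
  forall lam, L <= lam ->
    let c := a0 + a1 * lam + a2 * lam ^+ 2 + a3 * lam ^+ 3 in
    a3 / 2 * lam ^+ 3 <= c /\ c <= 3 * a3 / 2 * lam ^+ 3.
Proof.
move=> ha.
pose S := `|a0| + `|a1| + `|a2|.
have hS : 0 <= S.
  by rewrite /S; have := normr_ge0 a0; have := normr_ge0 a1; have := normr_ge0 a2; lra.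
exists (1 + 2 * S / a3); split; first by rewrite lerDl; apply: divr_ge0 => //; lra.
move=> lam hlam /=.
have h1 : 1 <= lam.
  have : 0 <= 2 * S / a3 by apply: divr_ge0 => //; lra.
  lra.
have hq := quad_bound a0 a1 a2 h1; rewrite -/S in hq.
have h2 : S <= a3 * lam / 2.
  have : 2 * S / a3 * a3 = 2 * S by field; rewrite gt_eqF.
  nra.
have h3 : S * lam ^+ 2 <= a3 / 2 * lam ^+ 3.
  rewrite exprS mulrA [_ * lam * _]mulrC -[X in _ <= X]mulrA.
  have : 0 <= lam ^+ 2 by rewrite exprn_ge0 //; lra.
  nra.
move: hq h3; set r := a0 + a1 * lam + a2 * lam ^+ 2.
have := ler_norm r; have := ler_norm (- r); rewrite normrN.
lra.
Qed.

Lemma cubic_growth (g : R -> R) (a0 a1 a2 a3 : R) :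
  (forall lam, g lam = a0 + a1 * lam + a2 * lam ^+ 2 + a3 * lam ^+ 3) ->
  0 < a3 -> tends_pinfty g /\ big_theta_cube g.
Proof.
move=> hg ha.
have [L [hL1 key]] := cubic_sandwich a0 a1 a2 ha.
split.
  move=> M; exists (Num.max L (1 + 2 * `|M| / a3)) => lam.
  rewrite ge_max => /andP [hl1 hl2].
  have [k1 _] := key lam hl1; rewrite -hg in k1.
  have hlam : 1 <= lam by lra.
  have h3 : lam <= lam ^+ 3 by rewrite !exprS expr0 mulr1; nra.
  have h4 : 2 * `|M| / a3 * a3 = 2 * `|M| by field; rewrite gt_eqF.
  have h5 := ler_norm M; have h6 := normr_ge0 M.
  have h7 : 0 <= 2 * `|M| / a3 by apply: divr_ge0 => //; lra.
  nra.
exists (a3 / 2), (3 * a3 / 2), L; split; [exact: divr_gt0 | apply: divr_gt0; lra |].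
move=> lam hlam; have [k1 k2] := key lam hlam; rewrite -hg in k1 k2.
have h0 : 0 <= lam by lra.
have : 0 <= lam ^+ 3 by apply: exprn_ge0.
have hg0 : 0 <= g lam by nra.
by rewrite (ger0_norm h0) (ger0_norm hg0); lra.
Qed.

(* Conversely, growth to +oo of order lam^3 forces a positive leading coefficient:
   if a3 <= 0 then eventually 0 <= g lam <= S lam^2 with S independent of lam. *)
Lemma cubic_growth_lead (g : R -> R) (a0 a1 a2 a3 : R) :
  (forall lam, g lam = a0 + a1 * lam + a2 * lam ^+ 2 + a3 * lam ^+ 3) ->
  tends_pinfty g -> big_theta_cube g -> 0 < a3.
Proof.
move=> hg ht [c1 [c2 [L [hc1 _ hcube]]]].
rewrite ltNge; apply/negP => ha3.
pose S := `|a0| + `|a1| + `|a2|.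
have [L0 HL0] := ht 0.
pose lam := Num.max (Num.max L L0) (Num.max 1 (S / c1 + 1)).
have [hL hL0] : L <= lam /\ L0 <= lam by rewrite /lam !le_max !lexx ?orbT.
have [h1 hS] : 1 <= lam /\ S / c1 + 1 <= lam by rewrite /lam !le_max !lexx ?orbT.
have hlam : 0 <= lam by lra.
have [k1 _] := hcube lam hL.
rewrite (ger0_norm hlam) (ger0_norm (HL0 lam hL0)) in k1.
have g_le : g lam <= S * lam ^+ 2.
  have hq := quad_bound a0 a1 a2 h1; rewrite -/S in hq.
  have : a3 * lam ^+ 3 <= 0 by rewrite mulr_le0_ge0 // exprn_ge0.
  by rewrite hg; have := ler_norm (a0 + a1 * lam + a2 * lam ^+ 2); lra.
have c1_lam : S < c1 * lam.
  have e : c1 * (S / c1 + 1) = S + c1 by field; rewrite gt_eqF.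
  by have := ler_pM2l hc1 (S / c1 + 1) lam; rewrite hS e; lra.
have : S * lam ^+ 2 < c1 * lam ^+ 3.
  have l2 : 0 < lam ^+ 2 by rewrite exprn_gt0 //; lra.
  by rewrite [lam ^+ 3]exprS; set t := lam ^+ 2 in l2 *; nra.
lra.
Qed.

End Cubics.

Section RayRestriction.
Variable R : realType.

Lemma size_prod_pow_linear (I : Type) (r : seq I) (l : I -> {poly R}) (e : I -> nat) :
  (forall i, size (l i) <= 2)%N ->
  (size (\prod_(i <- r) l i ^+ e i)%R <= (\sum_(i <- r) e i).+1)%N.
Proof.
move=> hl; elim: r => [|a r IH]; first by rewrite !big_nil size_poly1.
rewrite !big_cons; apply: leq_trans (size_polyMleq _ _) _.
have := size_poly_exp_leq (l a) (e a); have := hl a; nia.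
Qed.

Lemma ray_cubic_coefs n (f : {mpoly R[n]}) (x v : 'cV[R]_n) :
  (msize f <= 4)%N -> exists a0 a1 a2 a3 : R, forall lam,
    peval f (x + lam *: v) = a0 + a1 * lam + a2 * lam ^+ 2 + a3 * lam ^+ 3.
Proof.
move=> hf.
pose l (i : 'I_n) : {poly R} := (x i 0)%:P + (v i 0) *: 'X.
have hl i : (size (l i) <= 2)%N.
  apply: leq_trans (size_polyD _ _) _; rewrite geq_max size_polyC.
  apply/andP; split; first by case: (_ != _).
  by rewrite (leq_trans (size_scale_leq _ _)) // size_polyX.
pose q := \sum_(m <- msupp f) f@_m *: \prod_(i < n) l i ^+ m i.
have hq lam : q.[lam] = peval f (x + lam *: v).
  rewrite /peval mevalE /q horner_sum; apply: eq_bigr => mm _.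
  rewrite hornerZ horner_prod; congr (_ * _); apply: eq_bigr => j _.
  by rewrite horner_exp /l hornerD hornerC hornerZ hornerX !mxE mulrC.
have size_q : (size q <= 4)%N.
  rewrite /q big_seq; apply: (big_ind (fun p : {poly R} => size p <= 4)%N).
  - by rewrite size_poly0.
  - by move=> p1 p2 h1 h2; apply: leq_trans (size_polyD _ _) _; rewrite geq_max h1 h2.
  move=> mm hm; apply: leq_trans (size_scale_leq _ _) _.
  apply: leq_trans (size_prod_pow_linear _ (fun i => mm i) hl) _.
  by have := msize_mdeg_lt hm; rewrite mdegE => h; apply: leq_trans h hf.
exists q`_0, q`_1, q`_2, q`_3 => lam.
rewrite -hq (horner_coef_wide _ size_q) !big_ord_recr big_ord0 /=.
by rewrite expr0 expr1 mulr1 add0r.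
Qed.

(* The third finite difference of f along the ray, sampled at lam = 0,1,2,3;
   it recovers the leading coefficient of the cubic. *)
Definition third_diff n (f : {mpoly R[n]}) (x v : 'cV[R]_n) : R :=
  (peval f (x + 3 *: v) - 3 * peval f (x + 2 *: v)
     + 3 * peval f (x + 1 *: v) - peval f (x + 0 *: v)) / 6.

Lemma ray_cubic n (f : {mpoly R[n]}) (x v : 'cV[R]_n) :
  (msize f <= 4)%N -> exists a0 a1 a2 : R, forall lam,
    peval f (x + lam *: v) =
      a0 + a1 * lam + a2 * lam ^+ 2 + third_diff f x v * lam ^+ 3.
Proof.
move=> hf; have [a0 [a1 [a2 [a3 hray]]]] := ray_cubic_coefs x v hf.
have -> : third_diff f x v = a3 by rewrite /third_diff !hray; field.
by exists a0, a1, a2.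
Qed.

End RayRestriction.

Section Continuity.
Variable R : realType.
Variable n : nat.
Implicit Types (F G : 'cV[R]_n -> R) (p : 'cV[R]_n).

Definition cont_at F p : Prop :=
  forall e : R, 0 < e -> exists2 d : R, 0 < d &
    forall y, close_by p y d -> `|F y - F p| < e.

Lemma cont_ext F G p : (forall y, F y = G y) -> cont_at F p -> cont_at G p.
Proof.
move=> hFG hF e he; have [d hd H] := hF e he.
by exists d => // y hy; rewrite -!hFG; apply: H.
Qed.

Lemma cont_const (c : R) p : cont_at (fun _ => c) p.
Proof. by move=> e he; exists 1 => // y _; rewrite subrr normr0. Qed.

Lemma cont_coord (j : 'I_n) p : cont_at (fun y => y j 0) p.
Proof. by move=> e he; exists e => // y hy; rewrite distrC; apply: hy. Qed.

Lemma cont_add F G p :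
  cont_at F p -> cont_at G p -> cont_at (fun y => F y + G y) p.
Proof.
move=> hF hG e he.
have he2 : 0 < e / 2 by apply: divr_gt0.
have [d1 hd1 H1] := hF _ he2; have [d2 hd2 H2] := hG _ he2.
exists (Num.min d1 d2) => [|y hy]; first by rewrite lt_min hd1.
have h1 := H1 y (close_by_minl hy).
have h2 := H2 y (close_by_minr hy).
have -> : F y + G y - (F p + G p) = (F y - F p) + (G y - G p) by ring.
apply: le_lt_trans (ler_normD _ _) _; lra.
Qed.

Lemma cont_mul F G p :
  cont_at F p -> cont_at G p -> cont_at (fun y => F y * G y) p.
Proof.
move=> hF hG e he.
pose K := 1 + `|F p| + `|G p|.
have hK : 0 < K by rewrite /K; have := normr_ge0 (F p); have := normr_ge0 (G p); lra.
pose e' := Num.min 1 (e / (2 * K)).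
have he' : 0 < e' by rewrite lt_min ltr01 /= divr_gt0 // mulr_gt0.
have he'1 : e' <= 1 by rewrite ge_min lexx.
have he'K : e' * K <= e / 2.
  have : e' <= e / (2 * K) by rewrite ge_min lexx orbT.
  have : e / (2 * K) * K = e / 2 by field; rewrite gt_eqF.
  nra.
have [d1 hd1 H1] := hF _ he'; have [d2 hd2 H2] := hG _ he'.
exists (Num.min d1 d2) => [|y hy]; first by rewrite lt_min hd1.
have h1 := H1 y (close_by_minl hy).
have h2 := H2 y (close_by_minr hy).
have -> : F y * G y - F p * G p =
  (F y - F p) * (G y - G p) + (F y - F p) * G p + F p * (G y - G p) by ring.
set u := F y - F p in h1 *; set w := G y - G p in h2 *.
apply: le_lt_trans (ler_normD _ _) _.
have := ler_normD (u * w) (u * G p); rewrite !normrM.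
have := normr_ge0 u; have := normr_ge0 w.
have := normr_ge0 (F p); have := normr_ge0 (G p).
rewrite /K in he'K; nra.
Qed.

Lemma cont_big (idx : R) (op : Monoid.law idx) (I : Type) (r : seq I)
    (F : I -> 'cV[R]_n -> R) p :
  (forall G H, cont_at G p -> cont_at H p -> cont_at (fun y => op (G y) (H y)) p) ->
  (forall i, cont_at (F i) p) -> cont_at (fun y => \big[op/idx]_(i <- r) F i y) p.
Proof.
move=> hop hF; elim: r => [|a r IH].
  by apply: (@cont_ext (fun _ => idx)) (cont_const _ _) => y; rewrite big_nil.
by apply: cont_ext (hop _ _ (hF a) IH) => y; rewrite big_cons.
Qed.

Lemma cont_peval (f : {mpoly R[n]}) p : cont_at (peval f) p.
Proof.
apply: (@cont_ext (fun y => \sum_(m <- msupp f) f@_m * \prod_(i < n) y i 0 ^+ m i)).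
  by move=> y; rewrite /peval mevalE.
apply: cont_big => [G H hG hH|m]; first exact: cont_add hG hH.
apply: cont_mul; first exact: cont_const.
apply: cont_big => [G H hG hH|i]; first exact: cont_mul hG hH.
apply: (@cont_ext (fun y => \prod_(k < m i) y i 0)).
  by move=> y; rewrite prodr_const card_ord.
by apply: cont_big => [G H hG hH|k]; [exact: cont_mul hG hH | exact: cont_coord].
Qed.

End Continuity.

Section Stability.
Variable R : realType.
Variable n : nat.

Definition near_pair (x0 v0 : 'cV[R]_n) (P : 'cV[R]_n -> 'cV[R]_n -> Prop) : Prop :=
  exists2 d : R, 0 < d & forall x v, close_by x0 x d -> close_by v0 v d -> P x v.

Lemma near_pairI x0 v0 (P Q : 'cV[R]_n -> 'cV[R]_n -> Prop) :
  near_pair x0 v0 P -> near_pair x0 v0 Q ->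
  near_pair x0 v0 (fun x v => P x v /\ Q x v).
Proof.
move=> [d1 hd1 H1] [d2 hd2 H2].
exists (Num.min d1 d2) => [|x v hx hv]; first by rewrite lt_min hd1.
by split; [apply: H1 | apply: H2];
  [exact: close_by_minl hx | exact: close_by_minl hv
  | exact: close_by_minr hx | exact: close_by_minr hv].
Qed.

Lemma near_peval_ray (f : {mpoly R[n]}) x0 v0 (k e : R) :
  0 <= k <= 3 -> 0 < e ->
  near_pair x0 v0 (fun x v =>
    `|peval f (x + k *: v) - peval f (x0 + k *: v0)| < e).
Proof.
move=> /andP [hk0 hk3] he.
have [d hd H] := cont_peval f (x0 + k *: v0) he.
exists (d / 4) => [|x v hx hv]; first by rewrite divr_gt0.
apply: H => j; rewrite !mxE.
have -> : x0 j 0 + k * v0 j 0 - (x j 0 + k * v j 0) =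
  (x0 j 0 - x j 0) + k * (v0 j 0 - v j 0) by ring.
apply: le_lt_trans (ler_normD _ _) _.
rewrite normrM (ger0_norm hk0).
have := hx j; have := hv j; have := normr_ge0 (v0 j 0 - v j 0).
nra.
Qed.

Lemma third_diff_stable (f : {mpoly R[n]}) x0 v0 :
  0 < third_diff f x0 v0 ->
  near_pair x0 v0 (fun x v => 0 < third_diff f x v).
Proof.
move=> hD.
have he : 0 < third_diff f x0 v0 / 2 by rewrite divr_gt0.
have near_k k : 0 <= k <= 3 -> near_pair x0 v0 (fun x v =>
    `|peval f (x + k *: v) - peval f (x0 + k *: v0)| < third_diff f x0 v0 / 2).
  by move=> hk; apply: near_peval_ray.
have [d hd H] := near_pairI
  (near_pairI (near_k 0 ltac:(lra)) (near_k 1 ltac:(lra)))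
  (near_pairI (near_k 2 ltac:(lra)) (near_k 3 ltac:(lra))).
exists d => // x v hx hv.
have [[h0 h1] [h2 h3]] := H x v hx hv.
move: hD h0 h1 h2 h3; rewrite /third_diff !ltr_norml.
move=> hD /andP [? ?] /andP [? ?] /andP [? ?] /andP [? ?]; lra.
Qed.

End Stability.

Unset Implicit Arguments.
Set Strict Implicit.

Theorem proposition5 (R : realType) (m n : nat)
  (A : 'M[rat]_(m, n)) (b : 'cV[rat]_m) (f : {mpoly R[n]})
  (xb vb : 'cV[R]_n) :
  (msize f <= 4)%N ->
  polyhedron (R:=R) A b xb ->
  rec_cone (polyhedron (R:=R) A b) vb ->
  tends_pinfty (fun lam : R => peval f (xb + lam *: vb)) ->
  big_theta_cube (fun lam : R => peval f (xb + lam *: vb)) ->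
  forall eps : R, 0 < eps ->
  exists xt vt : 'cV[R]_n,
    [/\ is_rational_vec xt, is_rational_vec vt,
        polyhedron (R:=R) A b xt & rec_cone (polyhedron (R:=R) A b) vt] /\
    [/\ enorm (xb - xt) < eps, enorm (vb - vt) < eps,
        tends_pinfty (fun lam : R => peval f (xt + lam *: vt)) &
        big_theta_cube (fun lam : R => peval f (xt + lam *: vt))].
Proof.
move=> hf hxb hvb ht hth eps heps.
have [a0 [a1 [a2 hray]]] := ray_cubic xb vb hf.
have [d hd Hd] := third_diff_stable (cubic_growth_lead hray ht hth).
pose del := Num.min d (eps / (n%:R + 1)).
have hdel : 0 < del by rewrite lt_min hd divr_gt0 // ltr_pwDr ?ler0n.
have hcone := (rec_cone_polyhedronE vb hxb).1 hvb.
have [qx Pqx Cqx] := polyhedron_rat_dense hxb hdel.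
have [qv Pqv Cqv] := polyhedron_rat_dense hcone hdel.
have [b0 [b1 [b2 hray']]] := ray_cubic (map_mx ratr qx) (map_mx ratr qv) hf.
have [Tpinf Tcube] := cubic_growth hray' (Hd _ _ (close_by_minl Cqx) (close_by_minl Cqv)).
exists (map_mx ratr qx), (map_mx ratr qv); split; split => //.
- by exists qx.
- by exists qv.
- exact: (rec_cone_polyhedronE _ Pqx).2.
- exact: enorm_close heps (close_by_minr Cqx).
- exact: enorm_close heps (close_by_minr Cqv).
Qed.
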